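(* For every $n\geq1$, $T_n(I-S)=(I-S)W_n$ as operators on $H^2$. Consequently $\mathrm{span}\{(I-S)h_k:k\ge2\}$ is invariant under every $T_n$, and $1-z$ is a cyclic vector for $\{T_n:n\ge1\}$ in $H^2$ (i.e. $\mathrm{span}\{1-z^n:n\ge1\}$ is dense in $H^2$).
   Context: $H^2$ is the Hardy space on the open unit disk. $S$ is the shift operator $Sf(z)=zf(z)$ on $H^2$. $T_nf(z)=f(z^n)$ and $W_nf(z)=\frac{1-z^n}{1-z}f(z^n)$ for $n\ge1$. For $k\geq 2$, $h_k(z)=\frac{1}{1-z}\big(\mathrm{Log}(1-z^k)-\mathrm{Log}(1-z)-\ln k\big)$ with $\mathrm{Log}$ the principal branch. *)

From Stdlib Require Import Reals.
Open Scope R_scope.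

Definition Cx : Type := (R * R)%type.
Definition Cre (z : Cx) : R := fst z.
Definition Cim (z : Cx) : R := snd z.
Definition RtoC (x : R) : Cx := (x, 0).
Definition Czero : Cx := (0, 0).
Definition Cone : Cx := (1, 0).
Definition Cadd (z w : Cx) : Cx := (fst z + fst w, snd z + snd w).
Definition Copp (z : Cx) : Cx := (- fst z, - snd z).
Definition Csub (z w : Cx) : Cx := Cadd z (Copp w).
Definition Cmul (z w : Cx) : Cx :=
  (fst z * fst w - snd z * snd w, fst z * snd w + snd z * fst w).
Definition Cnorm2 (z : Cx) : R := fst z * fst z + snd z * snd z.
Definition Cabs (z : Cx) : R := sqrt (Cnorm2 z).
Definition Cinv (z : Cx) : Cx := (fst z / Cnorm2 z, - snd z / Cnorm2 z).
Definition Cdiv (z w : Cx) : Cx := Cmul z (Cinv w).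
Fixpoint Cpow (z : Cx) (n : nat) : Cx :=
  match n with O => Cone | S m => Cmul z (Cpow z m) end.

(* principal argument, in (-PI, PI] (value at 0 is irrelevant) *)
Definition Arg (z : Cx) : R :=
  let x := fst z in let y := snd z in
  if Rlt_dec 0 x then atan (y / x)
  else if Rlt_dec x 0 then
         (if Rle_dec 0 y then atan (y / x) + PI else atan (y / x) - PI)
  else if Rlt_dec 0 y then PI / 2
  else if Rlt_dec y 0 then - (PI / 2) else 0.
Definition CLog (z : Cx) : Cx := (ln (Cabs z), Arg z).

Definition in_disk (z : Cx) : Prop := Cabs z < 1.

Fixpoint Csum (u : nat -> Cx) (N : nat) : Cx :=
  match N with O => u O | S M => Cadd (Csum u M) (u N) end.

Definition Cseries_cv (u : nat -> Cx) (l : Cx) : Prop :=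
  Un_cv (fun N => fst (Csum u N)) (fst l) /\ Un_cv (fun N => snd (Csum u N)) (snd l).

Definition represents (a : nat -> Cx) (f : Cx -> Cx) : Prop :=
  forall z, in_disk z -> Cseries_cv (fun n => Cmul (a n) (Cpow z n)) (f z).

Definition square_summable_to (a : nat -> Cx) (L : R) : Prop :=
  Un_cv (fun N => sum_f_R0 (fun n => Cnorm2 (a n)) N) L.

Definition H2 (f : Cx -> Cx) : Prop :=
  exists a L, represents a f /\ square_summable_to a L.

Definition H2_norm_sq_lt (f : Cx -> Cx) (r : R) : Prop :=
  exists a L, represents a f /\ square_summable_to a L /\ L < r.

(* equality of functions on the disk (elements of H^2 live on the disk) *)
Definition eq_on_disk (f g : Cx -> Cx) : Prop :=
  forall z, in_disk z -> f z = g z.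

Definition Id_op (f : Cx -> Cx) : Cx -> Cx := f.
Definition S_op (f : Cx -> Cx) : Cx -> Cx := fun z => Cmul z (f z).
Definition I_minus_S (f : Cx -> Cx) : Cx -> Cx := fun z => Csub (f z) (S_op f z).
Definition T_op (n : nat) (f : Cx -> Cx) : Cx -> Cx := fun z => f (Cpow z n).
Definition W_op (n : nat) (f : Cx -> Cx) : Cx -> Cx :=
  fun z => Cmul (Cdiv (Csub Cone (Cpow z n)) (Csub Cone z)) (f (Cpow z n)).

Definition h (k : nat) : Cx -> Cx :=
  fun z => Cdiv (Csub (Csub (CLog (Csub Cone (Cpow z k))) (CLog (Csub Cone z)))
                      (RtoC (ln (INR k))))
                (Csub Cone z).

Definition in_span (P : nat -> Prop) (F : nat -> Cx -> Cx) (g : Cx -> Cx) : Prop :=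
  exists (N : nat) (c : nat -> Cx),
    (forall k, (k <= N)%nat -> ~ P k -> c k = Czero) /\
    eq_on_disk g (fun z => Csum (fun k => Cmul (c k) (F k z)) N).

Definition dense_in_H2 (M : (Cx -> Cx) -> Prop) : Prop :=
  forall f, H2 f -> forall eps, 0 < eps ->
    exists g, M g /\ H2_norm_sq_lt (fun z => Csub (f z) (g z)) (eps * eps).

From Stdlib Require Import Reals Lra Lia Classical.
Open Scope R_scope.

(* [I - S] is multiplication by [1 - z], so both [T_n (I - S) f] and [(I - S) W_n f]
   equal [(1 - z^n) f(z^n)] on the disk.  Likewise [(I - S) h_k] is
   [L_k z = Log(1 - z^k) - Log(1 - z) - ln k], and [L_k(z^n) = L_(nk)(z) - L_n(z)],
   so every [T_n] maps the generators of the span into the span.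

   The span of the [1 - z^n] contains every polynomial [p] with [p(1) = 0].  Given
   [f = sum a_n z^n] in [H^2], truncate it at an [N] beyond which the coefficients have
   small square sum, and cancel the value [c = a_0 + ... + a_N] of the truncation at 1
   by subtracting [c/(M+1)] from each of the next [M+1] coefficients: this costs only
   [|c|^2/(M+1)] in squared norm. *)

Lemma Cx_eq (z w : Cx) : fst z = fst w -> snd z = snd w -> z = w.
Proof. destruct z, w; simpl; intros; subst; reflexivity. Qed.

Lemma Cnorm2_ge0 (z : Cx) : 0 <= Cnorm2 z.
Proof. unfold Cnorm2; nra. Qed.

Lemma Cnorm2_mul (z w : Cx) : Cnorm2 (Cmul z w) = Cnorm2 z * Cnorm2 w.
Proof. unfold Cnorm2, Cmul; simpl; ring. Qed.

Lemma Cnorm2_pow (z : Cx) (n : nat) : Cnorm2 (Cpow z n) = Cnorm2 z ^ n.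
Proof.
induction n as [|n IH]; simpl.
- unfold Cnorm2, Cone; simpl; ring.
- rewrite Cnorm2_mul, IH; reflexivity.
Qed.

Lemma Cnorm2_sub_le (z w : Cx) : Cnorm2 (Csub z w) <= 2 * Cnorm2 z + 2 * Cnorm2 w.
Proof.
destruct z as [x1 x2], w as [y1 y2]; unfold Cnorm2, Csub, Cadd, Copp; simpl.
pose proof (pow2_ge_0 (x1 + y1)); pose proof (pow2_ge_0 (x2 + y2)); nra.
Qed.

Lemma Cmul_div_cancel (w u : Cx) : Cnorm2 w <> 0 -> Cmul w (Cdiv u w) = u.
Proof.
destruct w as [w1 w2], u as [u1 u2]; unfold Cnorm2, Cdiv, Cmul, Cinv; simpl.
intro Hw; apply Cx_eq; unfold Cnorm2; simpl; field; exact Hw.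
Qed.

Lemma Cpow_add (z : Cx) (a b : nat) : Cpow z (a + b) = Cmul (Cpow z a) (Cpow z b).
Proof.
induction a as [|a IH]; simpl.
- apply Cx_eq; simpl; ring.
- rewrite IH; apply Cx_eq; simpl; ring.
Qed.

Lemma Cpow_mul (z : Cx) (n k : nat) : Cpow (Cpow z n) k = Cpow z (n * k).
Proof.
induction k as [|k IH]; simpl.
- rewrite Nat.mul_0_r; reflexivity.
- rewrite IH, <- Cpow_add; f_equal; lia.
Qed.

Lemma Cpow_1 (z : Cx) : Cpow z 1 = z.
Proof. apply Cx_eq; simpl; ring. Qed.

Lemma in_disk_iff (z : Cx) : in_disk z <-> Cnorm2 z < 1.
Proof.
unfold in_disk, Cabs; split; intro H.
- rewrite <- sqrt_1 in H; apply sqrt_lt_0_alt in H; exact H.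
- rewrite <- sqrt_1; apply sqrt_lt_1_alt; split; [apply Cnorm2_ge0 | exact H].
Qed.

Lemma in_disk_pow (z : Cx) (n : nat) : (1 <= n)%nat -> in_disk z -> in_disk (Cpow z n).
Proof.
rewrite !in_disk_iff, Cnorm2_pow; intros Hn Hz.
apply pow_lt_1_compat; [split; [apply Cnorm2_ge0 | exact Hz] | lia].
Qed.

Lemma in_disk_one_sub_neq0 (z : Cx) : in_disk z -> Cnorm2 (Csub Cone z) <> 0.
Proof.
rewrite in_disk_iff; destruct z as [x y]; unfold Cnorm2, Csub, Cadd, Copp, Cone; simpl.
intros Hz E; nra.
Qed.

Lemma Csum_ext (u v : nat -> Cx) (N : nat) :
  (forall k, (k <= N)%nat -> u k = v k) -> Csum u N = Csum v N.
Proof.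
induction N as [|N IH]; simpl; intro H.
- apply H; lia.
- rewrite IH, H by (try intros; try apply H; lia); reflexivity.
Qed.

Lemma Csum_add (u v : nat -> Cx) (N : nat) :
  Csum (fun k => Cadd (u k) (v k)) N = Cadd (Csum u N) (Csum v N).
Proof.
induction N as [|N IH]; simpl; [reflexivity|].
rewrite IH; apply Cx_eq; simpl; ring.
Qed.

Lemma Csum_sub (u v : nat -> Cx) (N : nat) :
  Csum (fun k => Csub (u k) (v k)) N = Csub (Csum u N) (Csum v N).
Proof.
induction N as [|N IH]; simpl; [reflexivity|].
rewrite IH; apply Cx_eq; simpl; ring.
Qed.

Lemma Csum_scale (a : Cx) (u : nat -> Cx) (N : nat) :
  Csum (fun k => Cmul a (u k)) N = Cmul a (Csum u N).
Proof.
induction N as [|N IH]; simpl; [reflexivity|].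
rewrite IH; apply Cx_eq; simpl; ring.
Qed.

Lemma Csum_const (x : Cx) (N : nat) : Csum (fun _ => x) N = Cmul x (RtoC (INR (S N))).
Proof.
induction N as [|N IH]; cbn [Csum].
- apply Cx_eq; simpl; ring.
- rewrite IH, (S_INR (S N)); apply Cx_eq; simpl; ring.
Qed.

Lemma Csum_eventually_zero (u : nat -> Cx) (N M : nat) :
  (N <= M)%nat -> (forall k, (N < k)%nat -> u k = Czero) -> Csum u M = Csum u N.
Proof.
intros HNM Hu; induction M as [|M IH].
- replace N with 0%nat by lia; reflexivity.
- destruct (Nat.eq_dec N (S M)) as [->|HN]; [reflexivity|].
  simpl; rewrite IH, Hu by lia; apply Cx_eq; simpl; ring.
Qed.

Lemma Csum_split (u : nat -> Cx) (N M : nat) :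
  Csum u (N + S M) = Cadd (Csum u N) (Csum (fun i => u (S N + i)%nat) M).
Proof.
induction M as [|M IH].
- rewrite Nat.add_1_r; cbn [Csum]; rewrite Nat.add_0_r; reflexivity.
- rewrite Nat.add_succ_r; cbn [Csum]; rewrite IH.
  replace (S N + S M)%nat with (S (N + S M)) by lia.
  apply Cx_eq; simpl; ring.
Qed.

Lemma Csum_delta (j : nat) (x : Cx) :
  Csum (fun k => if Nat.eq_dec k j then x else Czero) j = x.
Proof.
destruct j as [|j]; cbn [Csum].
- destruct (Nat.eq_dec 0 0); [reflexivity | lia].
- rewrite (Csum_ext _ (fun _ => Czero)).
  + rewrite Csum_const; destruct (Nat.eq_dec (S j) (S j)); [|lia].
    apply Cx_eq; simpl; ring.
  + intros k Hk; destruct (Nat.eq_dec k (S j)); [lia | reflexivity].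
Qed.

Definition coef_trunc (N : nat) (c : nat -> Cx) (k : nat) : Cx :=
  if (k <=? N)%nat then c k else Czero.

Lemma Csum_coef_trunc (N M : nat) (c x : nat -> Cx) : (N <= M)%nat ->
  Csum (fun k => Cmul (coef_trunc N c k) (x k)) M = Csum (fun k => Cmul (c k) (x k)) N.
Proof.
intro HNM; unfold coef_trunc.
rewrite (Csum_eventually_zero _ N M HNM).
- apply Csum_ext; intros k Hk; apply Nat.leb_le in Hk; rewrite Hk; reflexivity.
- intros k Hk; apply Nat.leb_gt in Hk; rewrite Hk; apply Cx_eq; simpl; ring.
Qed.

Section Span.

Variable P : nat -> Prop.
Variable F : nat -> Cx -> Cx.

Lemma in_span_ext (g1 g2 : Cx -> Cx) :
  eq_on_disk g1 g2 -> in_span P F g1 -> in_span P F g2.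
Proof.
intros E [N [c [Hc Eg]]]; exists N, c; split; [exact Hc|].
intros z Hz; rewrite <- E by exact Hz; apply Eg, Hz.
Qed.

Lemma in_span_zero : in_span P F (fun _ => Czero).
Proof.
exists 0%nat, (fun _ => Czero); split; [reflexivity|].
intros z _; apply Cx_eq; simpl; ring.
Qed.

Lemma in_span_basis (j : nat) : P j -> in_span P F (F j).
Proof.
intro Pj; exists j, (fun k => if Nat.eq_dec k j then Cone else Czero); split.
- intros k _ nPk; destruct (Nat.eq_dec k j) as [->|]; [contradiction | reflexivity].
- intros z _; rewrite (Csum_ext _ (fun k => if Nat.eq_dec k j then F j z else Czero)).
  + symmetry; apply Csum_delta.
  + intros k _; destruct (Nat.eq_dec k j) as [->|]; apply Cx_eq; simpl; ring.
Qed.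

Lemma in_span_scale (a : Cx) (g : Cx -> Cx) :
  in_span P F g -> in_span P F (fun z => Cmul a (g z)).
Proof.
intros [N [c [Hc Eg]]]; exists N, (fun k => Cmul a (c k)); split.
- intros k Hk nPk; rewrite Hc by assumption; apply Cx_eq; simpl; ring.
- intros z Hz; rewrite Eg, <- Csum_scale by exact Hz.
  apply Csum_ext; intros; apply Cx_eq; simpl; ring.
Qed.

Lemma in_span_add (g1 g2 : Cx -> Cx) :
  in_span P F g1 -> in_span P F g2 -> in_span P F (fun z => Cadd (g1 z) (g2 z)).
Proof.
intros [N1 [c1 [Hc1 E1]]] [N2 [c2 [Hc2 E2]]].
exists (max N1 N2), (fun k => Cadd (coef_trunc N1 c1 k) (coef_trunc N2 c2 k)); split.
- intros k Hk nPk; unfold coef_trunc.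
  destruct (k <=? N1)%nat eqn:H1, (k <=? N2)%nat eqn:H2;
    apply Nat.leb_le in H1 || apply Nat.leb_gt in H1;
    apply Nat.leb_le in H2 || apply Nat.leb_gt in H2;
    rewrite ?Hc1, ?Hc2 by assumption; apply Cx_eq; simpl; ring.
- intros z Hz; rewrite E1, E2 by exact Hz.
  rewrite (Csum_ext _ (fun k => Cadd (Cmul (coef_trunc N1 c1 k) (F k z))
                                     (Cmul (coef_trunc N2 c2 k) (F k z))) (max N1 N2)).
  + rewrite Csum_add, (Csum_coef_trunc N1 (max N1 N2)), (Csum_coef_trunc N2 (max N1 N2))
      by lia; reflexivity.
  + intros; apply Cx_eq; simpl; ring.
Qed.

Lemma in_span_sub (g1 g2 : Cx -> Cx) :
  in_span P F g1 -> in_span P F g2 -> in_span P F (fun z => Csub (g1 z) (g2 z)).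
Proof.
intros H1 H2; apply (in_span_ext (fun z => Cadd (g1 z) (Cmul (Copp Cone) (g2 z)))).
- intros z _; apply Cx_eq; simpl; ring.
- apply in_span_add, in_span_scale; assumption.
Qed.

Lemma in_span_Csum (G : nat -> Cx -> Cx) (N : nat) :
  (forall k, (k <= N)%nat -> in_span P F (G k)) ->
  in_span P F (fun z => Csum (fun k => G k z) N).
Proof.
induction N as [|N IH]; intro HG; cbn [Csum].
- apply HG; lia.
- apply in_span_add; [apply IH; intros; apply HG | apply HG]; lia.
Qed.

Lemma in_span_comp (phi : Cx -> Cx) (g : Cx -> Cx) :
  (forall z, in_disk z -> in_disk (phi z)) ->
  (forall k, P k -> in_span P F (fun z => F k (phi z))) ->
  in_span P F g -> in_span P F (fun z => g (phi z)).
Proof.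
intros Hphi HF [N [c [Hc Eg]]].
apply (in_span_ext (fun z => Csum (fun k => Cmul (c k) (F k (phi z))) N)).
- intros z Hz; symmetry; apply Eg, Hphi, Hz.
- apply in_span_Csum; intros k Hk.
  destruct (classic (P k)) as [Pk | nPk].
  + apply in_span_scale, HF, Pk.
  + rewrite Hc by assumption.
    apply (in_span_ext (fun _ => Czero)); [intros z _; apply Cx_eq; simpl; ring|].
    apply in_span_zero.
Qed.

End Span.

Lemma I_minus_S_eq (f : Cx -> Cx) (z : Cx) :
  I_minus_S f z = Cmul (Csub Cone z) (f z).
Proof. unfold I_minus_S, S_op; apply Cx_eq; simpl; ring. Qed.

Lemma T_op_I_minus_S (n : nat) (f : Cx -> Cx) :
  eq_on_disk (T_op n (I_minus_S f)) (I_minus_S (W_op n f)).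
Proof.
intros z Hz; unfold T_op, W_op; rewrite !I_minus_S_eq.
rewrite (Cx_eq (Cmul (Csub Cone z) (Cmul _ _))
               (Cmul (Cmul (Csub Cone z) (Cdiv (Csub Cone (Cpow z n)) (Csub Cone z)))
                     (f (Cpow z n)))) by (simpl; ring).
rewrite Cmul_div_cancel by (apply in_disk_one_sub_neq0, Hz); reflexivity.
Qed.

Definition log_quot (k : nat) (z : Cx) : Cx :=
  Csub (Csub (CLog (Csub Cone (Cpow z k))) (CLog (Csub Cone z))) (RtoC (ln (INR k))).

Lemma I_minus_S_h (k : nat) : eq_on_disk (I_minus_S (h k)) (log_quot k).
Proof.
intros z Hz; rewrite I_minus_S_eq; unfold h.
apply Cmul_div_cancel, in_disk_one_sub_neq0, Hz.
Qed.

(* The logarithms only regroup, so no branch of [Log] is involved. *)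
Lemma log_quot_pow (n k : nat) (z : Cx) : (1 <= n)%nat -> (1 <= k)%nat ->
  log_quot k (Cpow z n) = Csub (log_quot (n * k) z) (log_quot n z).
Proof.
intros Hn Hk; unfold log_quot; rewrite Cpow_mul.
rewrite mult_INR, ln_mult by (apply lt_0_INR; lia).
apply Cx_eq; simpl; ring.
Qed.

Lemma I_minus_S_h_pow_in_span (n k : nat) : (1 <= n)%nat -> (2 <= k)%nat ->
  in_span (fun k => (2 <= k)%nat) (fun k => I_minus_S (h k))
          (fun z => I_minus_S (h k) (Cpow z n)).
Proof.
intros Hn Hk; destruct (Nat.eq_dec n 1) as [->|Hn1].
- apply (in_span_ext _ _ (I_minus_S (h k))); [intros z _; rewrite Cpow_1; reflexivity|].
  exact (in_span_basis _ (fun k => I_minus_S (h k)) k Hk).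
- apply (in_span_ext _ _ (fun z => Csub (I_minus_S (h (n * k)) z) (I_minus_S (h n) z))).
  + intros z Hz; rewrite !I_minus_S_h by (assumption || apply in_disk_pow; assumption).
    rewrite log_quot_pow by lia; reflexivity.
  + apply in_span_sub; apply (in_span_basis _ (fun k => I_minus_S (h k))); lia.
Qed.

Definition Cpoly (e : nat -> Cx) (K : nat) (z : Cx) : Cx :=
  Csum (fun n => Cmul (e n) (Cpow z n)) K.

Lemma Cpoly_in_span_one_sub_pow (e : nat -> Cx) (K : nat) : Csum e K = Czero ->
  in_span (fun n => (1 <= n)%nat) (fun n => T_op n (fun z => Csub Cone z)) (Cpoly e K).
Proof.
intro He; exists K, (fun n => if Nat.eq_dec n 0 then Czero else Copp (e n)); split.
- intros n _ Hn; destruct (Nat.eq_dec n 0); [reflexivity | lia].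
- intros z _; unfold Cpoly, T_op.
  rewrite <- (Cx_eq (Csub (Csum (fun n => Cmul (e n) (Cpow z n)) K) (Csum e K)) _)
    by (rewrite He; simpl; ring).
  rewrite <- Csum_sub; apply Csum_ext; intros n _.
  destruct (Nat.eq_dec n 0) as [->|]; apply Cx_eq; simpl; ring.
Qed.

Lemma Un_cv_eventually_shift (u v : nat -> R) (l c : R) (K : nat) :
  Un_cv u l -> (forall m, (K <= m)%nat -> v m = u m - c) -> Un_cv v (l - c).
Proof.
intros Hu Hv eps Heps; destruct (Hu eps Heps) as [N HN]; exists (max N K); intros m Hm.
unfold R_dist in *; rewrite Hv by lia.
replace (u m - c - (l - c)) with (u m - l) by ring; apply HN; lia.
Qed.

Lemma represents_sub_Cpoly (a e : nat -> Cx) (f : Cx -> Cx) (K : nat) :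
  represents a f -> (forall n, (K < n)%nat -> e n = Czero) ->
  represents (fun n => Csub (a n) (e n)) (fun z => Csub (f z) (Cpoly e K z)).
Proof.
intros Ha He z Hz; destruct (Ha z Hz) as [Hre Him].
assert (Hpartial : forall m, (K <= m)%nat ->
  Csum (fun n => Cmul (Csub (a n) (e n)) (Cpow z n)) m =
  Csub (Csum (fun n => Cmul (a n) (Cpow z n)) m) (Cpoly e K z)).
{ intros m Hm; unfold Cpoly.
  rewrite <- (Csum_eventually_zero (fun n => Cmul (e n) (Cpow z n)) K m Hm)
    by (intros n Hn; rewrite He by exact Hn; apply Cx_eq; simpl; ring).
  rewrite <- Csum_sub; apply Csum_ext; intros; apply Cx_eq; simpl; ring. }
split; [apply (Un_cv_eventually_shift _ _ _ _ K Hre)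
      | apply (Un_cv_eventually_shift _ _ _ _ K Him)];
  intros m Hm; rewrite Hpartial by exact Hm; reflexivity.
Qed.

Definition sqsum (a : nat -> Cx) (m : nat) : R := sum_f_R0 (fun n => Cnorm2 (a n)) m.

Lemma sqsum_le (a : nat -> Cx) (L : R) (m : nat) : square_summable_to a L -> sqsum a m <= L.
Proof. intro Ha; apply sum_incr; [exact Ha | intro; apply Cnorm2_ge0]. Qed.

Lemma square_summable_to_eventually (a b : nat -> Cx) (L : R) (K : nat) :
  square_summable_to a L -> (forall n, (K < n)%nat -> Cnorm2 (b n) = Cnorm2 (a n)) ->
  square_summable_to b (L - sqsum a K + sqsum b K).
Proof.
intros Ha Hab.
assert (Hpartial : forall m, (K <= m)%nat ->
  sqsum b m = sqsum a m - (sqsum a K - sqsum b K)).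
{ intros m Hm; induction m as [|m IH].
  - replace K with 0%nat by lia; ring.
  - destruct (Nat.eq_dec K (S m)) as [<-|HK]; [ring|].
    unfold sqsum in *; simpl; rewrite IH, Hab by lia; ring. }
replace (L - sqsum a K + sqsum b K) with (L - (sqsum a K - sqsum b K)) by ring.
exact (Un_cv_eventually_shift _ _ _ _ K Ha Hpartial).
Qed.

Lemma sum_f_R0_split (u : nat -> R) (N M : nat) :
  sum_f_R0 u (N + S M) = sum_f_R0 u N + sum_f_R0 (fun i => u (S N + i)%nat) M.
Proof. rewrite (tech2 u N (N + S M)) by lia; do 3 f_equal; lia. Qed.

Definition zero_sum_approx (a : nat -> Cx) (N M : nat) (n : nat) : Cx :=
  if (n <=? N)%nat then a n
  else if (n <=? N + S M)%nat then Cmul (Csum a N) (RtoC (- / INR (S M)))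
  else Czero.

Lemma zero_sum_approx_vanish (a : nat -> Cx) (N M n : nat) :
  (N + S M < n)%nat -> zero_sum_approx a N M n = Czero.
Proof.
intro Hn; unfold zero_sum_approx.
replace (n <=? N)%nat with false by (symmetry; apply Nat.leb_gt; lia).
replace (n <=? N + S M)%nat with false by (symmetry; apply Nat.leb_gt; lia).
reflexivity.
Qed.

Lemma zero_sum_approx_head (a : nat -> Cx) (N M n : nat) :
  (n <= N)%nat -> zero_sum_approx a N M n = a n.
Proof. intro Hn; unfold zero_sum_approx; apply Nat.leb_le in Hn; rewrite Hn; reflexivity. Qed.

Lemma zero_sum_approx_tail (a : nat -> Cx) (N M i : nat) : (i <= M)%nat ->
  zero_sum_approx a N M (S N + i) = Cmul (Csum a N) (RtoC (- / INR (S M))).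
Proof.
intro Hi; unfold zero_sum_approx.
replace (S N + i <=? N)%nat with false by (symmetry; apply Nat.leb_gt; lia).
replace (S N + i <=? N + S M)%nat with true by (symmetry; apply Nat.leb_le; lia).
reflexivity.
Qed.

Lemma zero_sum_approx_sum (a : nat -> Cx) (N M : nat) :
  Csum (zero_sum_approx a N M) (N + S M) = Czero.
Proof.
rewrite Csum_split.
rewrite (Csum_ext _ a N) by (intros; apply zero_sum_approx_head; assumption).
rewrite (Csum_ext _ (fun _ => Cmul (Csum a N) (RtoC (- / INR (S M)))) M)
  by (intros; apply zero_sum_approx_tail; assumption).
rewrite Csum_const; pose proof (lt_0_INR (S M) (Nat.lt_0_succ M)).
set (r := INR (S M)) in *; apply Cx_eq; simpl; field; lra.
Qed.

Lemma zero_sum_approx_residual (a : nat -> Cx) (N M : nat) :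
  sqsum (fun n => Csub (a n) (zero_sum_approx a N M n)) (N + S M) <=
  2 * (sqsum a (N + S M) - sqsum a N) + 2 * (Cnorm2 (Csum a N) / INR (S M)).
Proof.
assert (HM : 0 < INR (S M)) by (apply lt_0_INR; lia).
set (r := INR (S M)) in *.
set (d := Cmul (Csum a N) (RtoC (- / r))).
assert (Hd : Cnorm2 d * r = Cnorm2 (Csum a N) / r).
{ unfold d; rewrite Cnorm2_mul; unfold Cnorm2 at 2; simpl; field; lra. }
unfold sqsum; rewrite !sum_f_R0_split.
rewrite (sum_eq _ (fun _ => 0) N)
  by (intros; rewrite zero_sum_approx_head by assumption;
      unfold Cnorm2; simpl; ring).
rewrite sum_cte, Rmult_0_l, Rplus_0_l, <- Hd.
eapply Rle_trans.
- apply (sum_Rle _ (fun i => Cnorm2 (a (S N + i)%nat) * 2 + Cnorm2 d * 2)).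
  intros i Hi; rewrite zero_sum_approx_tail by assumption; fold r d.
  pose proof (Cnorm2_sub_le (a (S N + i)%nat) d); lra.
- rewrite plus_sum, sum_cte, <- scal_sum; fold r.
  apply Req_le; ring.
Qed.

Lemma exists_div_INR_S_lt (x r : R) : 0 <= x -> 0 < r -> exists M : nat, x / INR (S M) < r.
Proof.
intros Hx Hr; destruct (archimed_cor1 (r / (x + 1))) as [M [HM HM0]].
{ apply Rdiv_lt_0_compat; lra. }
exists M; rewrite S_INR.
assert (HMpos : 0 < INR M) by (apply lt_0_INR; lia).
apply (Rmult_lt_compat_l (x + 1)) in HM; [|lra].
replace ((x + 1) * (r / (x + 1))) with r in HM by (field; lra).
apply (Rle_lt_trans _ ((x + 1) * / INR M)); [|exact HM].
unfold Rdiv; apply Rmult_le_compat; try lra.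
- apply Rlt_le, Rinv_0_lt_compat; lra.
- apply Rlt_le, Rinv_lt_contravar; nra.
Qed.

Lemma dense_in_H2_of_Cpoly (span : (Cx -> Cx) -> Prop) :
  (forall e K, Csum e K = Czero -> span (Cpoly e K)) -> dense_in_H2 span.
Proof.
intros Hspan f [a [L [Ha HL]]] eps Heps.
assert (He2 : 0 < eps * eps / 4) by nra.
destruct (HL _ He2) as [N HN]; specialize (HN N (le_n N)); unfold R_dist in HN.
change (Rabs (sqsum a N - L) < eps * eps / 4) in HN; apply Rabs_def2 in HN.
destruct (exists_div_INR_S_lt (Cnorm2 (Csum a N)) _ (Cnorm2_ge0 _) He2) as [M HM].
set (K := (N + S M)%nat); set (e := zero_sum_approx a N M).
exists (Cpoly e K); split; [apply Hspan, zero_sum_approx_sum|].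
exists (fun n => Csub (a n) (e n)), (L - sqsum a K + sqsum (fun n => Csub (a n) (e n)) K).
split; [|split].
- apply represents_sub_Cpoly; [exact Ha|].
  intros n Hn; apply zero_sum_approx_vanish, Hn.
- apply square_summable_to_eventually; [exact HL|].
  intros n Hn; unfold e; rewrite zero_sum_approx_vanish by exact Hn.
  unfold Cnorm2; simpl; ring.
- pose proof (zero_sum_approx_residual a N M) as Hres; fold K e in Hres.
  pose proof (sqsum_le a L K HL); lra.
Qed.

Theorem mainTheorem7 :
  (forall n : nat, (1 <= n)%nat ->
     forall f, H2 f ->
       eq_on_disk (T_op n (I_minus_S f)) (I_minus_S (W_op n f))) /\
  (forall n : nat, (1 <= n)%nat ->
     forall g, in_span (fun k => (2 <= k)%nat) (fun k => I_minus_S (h k)) g ->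
       in_span (fun k => (2 <= k)%nat) (fun k => I_minus_S (h k)) (T_op n g)) /\
  (forall n : nat, eq_on_disk (T_op n (fun z => Csub Cone z)) (fun z => Csub Cone (Cpow z n))) /\
  dense_in_H2 (in_span (fun n => (1 <= n)%nat) (fun n => T_op n (fun z => Csub Cone z))).
Proof.
split; [intros n _ f _; apply T_op_I_minus_S|].
split.
{ intros n Hn g Hg; apply (in_span_comp _ _ (fun z => Cpow z n)); [| |exact Hg].
  - intros z Hz; apply in_disk_pow; assumption.
  - intros k Hk; apply I_minus_S_h_pow_in_span; assumption. }
split; [intros n z _; reflexivity|].
apply dense_in_H2_of_Cpoly, Cpoly_in_span_one_sub_pow.
Qed.
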